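(* Let $Q$ be a finite poset, $X_Q$ its cube complex, and let $P_i=C(I_i,M_i)$ and $P_{i+1}=C(I_{i+1},M_{i+1})$ be consecutive cubes of a valid cube sequence in $X_Q$. Then the interval $X[P_i,P_{i+1}]$ is a truncated CAT(0) orthant space whose origin is the vertex corresponding to the order ideal $I_i$.
   Context: For a finite poset $Q$, $X_Q$ is the cube complex whose vertices are the order ideals of $Q$ and with a cube $C(I,M)$ for each order ideal $I$ and subset $M$ of the set of maximal elements of $I$, whose vertices are $I\setminus S$, $S\subseteq M$. A valid cube sequence is a sequence of cubes $C(I_1,M_1),\dots,C(I_k,M_k)$ of $X_Q$ such that (a) $I_1\subset\cdots\subset I_k=Q$; (b) $I_1=M_1$ and $I_j\setminus I_{j-1}\subseteq M_j$ for $1<j\le k$; (c) each $M_j$ is a maximal antichain of $Q$. For cubes $C,D$, the interval $X[C,D]$ is the subcomplex consisting of all cubes all of whose vertices lie on at least one edge geodesic between a vertex of $C$ and a vertex of $D$. A CAT(0) orthant space $(V,\Omega)$ is given by a set $V$ of coordinates and a flag simplicial complex $\Omega$ on $V$: it is the union of orthants $\mathbb{R}^{|F|}_{\ge 0}$ (non-negative vectors with coordinates indexed by $F$), one for each face $F$ of $\Omega$, identified along subcones of common coordinates, all sharing the origin. A truncated CAT(0) orthant space is obtained by replacing each orthant $\mathbb{R}^{|F|}_{\ge0}$ by the unit cube $[0,1]^{|F|}$; its origin is the common vertex $0$. *)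

From HB Require Import structures.
From mathcomp Require Import all_boot all_order.
Set Implicit Arguments. Unset Strict Implicit. Unset Printing Implicit Defensive.

Local Open Scope order_scope.

Section XQ.
Context {d : Order.disp_t} {Q : finPOrderType d}.

Definition order_ideal (I : {set Q}) : bool :=
  [forall x, forall y, ((y <= x) && (x \in I)) ==> (y \in I)].

Definition maximal_in (I : {set Q}) (x : Q) : bool :=
  (x \in I) && [forall y, ((y \in I) && (x <= y)) ==> (y == x)].

Definition is_cube (I M : {set Q}) : bool :=
  order_ideal I && [forall x, (x \in M) ==> maximal_in I x].

Definition cube_verts (I M : {set Q}) : {set {set Q}} :=
  [set I :\: S | S in powerset M].

(* cubes of X_Q, each identified with its vertex set *)
Definition XQ_cube (K : {set {set Q}}) : Prop :=
  exists I M, is_cube I M /\ K = cube_verts I M.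

Definition XQ_adj : rel {set Q} := fun x y =>
  [exists I, exists m, is_cube I [set m] &&
     (((x == I) && (y == I :\ m)) || ((y == I) && (x == I :\ m)))].

Definition edge_path (a b : {set Q}) (p : seq {set Q}) : bool :=
  path XQ_adj a p && (last a p == b).

Definition geodesic (a b : {set Q}) (p : seq {set Q}) : Prop :=
  edge_path a b p /\ forall q, edge_path a b q -> (size p <= size q)%N.

Definition on_geodesic (v a b : {set Q}) : Prop :=
  exists p, geodesic a b p /\ v \in a :: p.

Definition interval_cube (C D : {set {set Q}}) (K : {set {set Q}}) : Prop :=
  XQ_cube K /\
  forall v, v \in K -> exists c e, [/\ c \in C, e \in D & on_geodesic v c e].

Definition antichain (A : {set Q}) : bool :=
  [forall x in A, forall y in A, (x <= y) ==> (x == y)].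

Definition maximal_antichain (A : {set Q}) : Prop :=
  antichain A /\ forall B, antichain B -> A \subset B -> B = A.

(* a sequence of cubes C(I_j,M_j), stored as pairs (I_j, M_j), 0-indexed *)
Definition sI (s : seq ({set Q} * {set Q})) (j : nat) : {set Q} :=
  (nth (set0, set0) s j).1.
Definition sM (s : seq ({set Q} * {set Q})) (j : nat) : {set Q} :=
  (nth (set0, set0) s j).2.

Definition valid_cube_seq (s : seq ({set Q} * {set Q})) : Prop :=
  [/\ (0 < size s)%N,
      forall j, (j < size s)%N -> is_cube (sI s j) (sM s j),
      forall j, (j.+1 < size s)%N -> sI s j \proper sI s j.+1,
      sI s (size s).-1 = setT &
    [/\ sI s 0 = sM s 0,
      forall j, (0 < j < size s)%N -> (sI s j :\: sI s j.-1) \subset sM s j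
    & forall j, (j < size s)%N -> maximal_antichain (sM s j)]].

End XQ.

Section Orthant.
Context {V : finType}.

Definition flag_complex (Om : {set {set V}}) : Prop :=
  [/\ set0 \in Om,
      forall F G : {set V}, F \in Om -> G \subset F -> G \in Om,
      forall v, [set v] \in Om
    & forall F : {set V}, (forall u w, u \in F -> w \in F -> [set u; w] \in Om) -> F \in Om].

(* cubes of the truncated orthant space of (V,Om): vertices are the 0/1
   vectors supported on faces (identified with faces); the cubes are the
   faces of the unit cubes [0,1]^F, i.e. sets {H | G <= H <= F}, G <= F faces *)
Definition orth_cube (Om : {set {set V}}) (K : {set {set V}}) : Prop :=
  exists G F, [/\ G \in Om, F \in Om, G \subset F &
                  K = [set H : {set V} | (G \subset H) && (H \subset F)]].
End Orthant.

Definition truncated_orthant_iso {d : Order.disp_t} {Q : finPOrderType d}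
  {V : finType} (Om : {set {set V}}) (f : {set V} -> {set Q})
  (cubes : {set {set Q}} -> Prop) (o : {set Q}) : Prop :=
  [/\ flag_complex Om,
      {in Om &, injective f},
      f set0 = o &
    [/\
      forall v, (exists K, cubes K /\ v \in K) -> exists2 F, F \in Om & f F = v,
      forall K : {set {set V}}, K \subset Om -> (orth_cube Om K <-> cubes (f @: K))
    & forall K', cubes K' -> exists2 K : {set {set V}}, K \subset Om & K' = f @: K]].

Definition is_truncated_orthant_space {d : Order.disp_t} {Q : finPOrderType d}
  (cubes : {set {set Q}} -> Prop) (o : {set Q}) : Prop :=
  exists (V : finType) (Om : {set {set V}}) (f : {set V} -> {set Q}),
    truncated_orthant_iso Om f cubes o.

(* Write A = I_i, B = I_(i+1), M = M_i, N = M_(i+1).  The edge distance in X_Q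
   between order ideals c and e is #|c (+) e| (symmetric difference): one can
   always remove a maximal element of c \ e or add a minimal element of e \ c.
   Hence v lies on a geodesic from c to e iff v is an ideal with
   c :&: e <= v <= c :|: e, and the vertices of X[P_i, P_(i+1)] are the ideals
   v <= B with A \ v <= M :|: N.
   Such a v is coordinatized by A (+) v, a subset of
   D = (B \ A) :|: (A :&: (M :|: N)).  Every element of D is maximal in A or in
   B, so A (+) h is an ideal iff no element of h :&: A lies below an element of
   h \ A.  This condition is pairwise, so these h are the faces of a flag
   complex on D, and the coordinates map the cubes of the interval exactly onto
   the boxes [G, F] between faces G <= F, with A going to the empty face. *)

From HB Require Import structures.
From mathcomp Require Import all_boot all_order.
Set Implicit Arguments. Unset Strict Implicit. Unset Printing Implicit Defensive.

Local Open Scope order_scope.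
Import Order.POrderTheory.

Lemma exists_maximal d (T : finPOrderType d) (X : {set T}) x0 : x0 \in X ->
  exists2 m, m \in X & forall z, z \in X -> m <= z -> z = m.
Proof.
move=> x0X; pose below x := #|[set y in X | y <= x]|.
case: (arg_maxnP below x0X) => m mX maxm; exists m => // z zX mz.
apply/eqP; rewrite eq_le mz andbT; apply: contraTT (maxm z zX) => zNm.
rewrite -ltnNge; apply: proper_card; apply/properP; split.
  by apply/subsetP => y; rewrite !inE => /andP[-> /le_trans]; apply.
by exists z; rewrite !inE zX ?lexx // (negbTE zNm).
Qed.

Lemma exists_minimal d (T : finPOrderType d) (X : {set T}) x0 : x0 \in X ->
  exists2 m, m \in X & forall z, z \in X -> z <= m -> z = m.
Proof. exact: (@exists_maximal _ T^d). Qed.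

Section SymmetricDifference.
Variable T : finType.
Implicit Types X Y Z : {set T}.

Definition symdiff X Y := (X :\: Y) :|: (Y :\: X).

Lemma in_symdiff z X Y : (z \in symdiff X Y) = (z \in X) (+) (z \in Y).
Proof. by rewrite !inE; case: (z \in X); case: (z \in Y). Qed.

Lemma symdiffC : commutative symdiff.
Proof. by move=> X Y; rewrite /symdiff setUC. Qed.

Lemma symdiffK X : involutive (symdiff X).
Proof. by move=> Y; apply/setP => z; rewrite !in_symdiff addKb. Qed.

Lemma symdiff_eq0 X Y : (symdiff X Y == set0) = (X == Y).
Proof.
apply/eqP/eqP => [/setP XY|->]; last by apply/setP => z; rewrite in_symdiff addbb inE.
by apply/setP => z; move: (XY z); rewrite in_symdiff inE; case: (z \in X); case: (z \in Y).
Qed.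

Lemma symdiff_sub_setU X Y Z : symdiff X Z \subset symdiff X Y :|: symdiff Y Z.
Proof.
apply/subsetP => z; rewrite in_symdiff in_setU !in_symdiff.
by case: (z \in X); case: (z \in Y); case: (z \in Z).
Qed.

Lemma card_symdiff X Y : #|symdiff X Y| + (#|X :&: Y|).*2 = #|X| + #|Y|.
Proof.
have -> : symdiff X Y = (X :|: Y) :\: (X :&: Y).
  by apply/setP => z; rewrite in_symdiff !inE; case: (z \in X); case: (z \in Y).
have subIU : X :&: Y \subset X :|: Y := subset_trans (subsetIl X Y) (subsetUl X Y).
by rewrite cardsDS // -addnn addnA subnK ?subset_leq_card // cardsUI.
Qed.

Lemma card_symdiff_setD1 X x : x \in X -> #|symdiff X (X :\ x)| = 1.
Proof.
move=> xX; suff -> : symdiff X (X :\ x) = [set x] by rewrite cards1.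
by apply/setP => z; rewrite in_symdiff !inE; case: eqP => [->|_]; rewrite ?xX ?addbb.
Qed.

Lemma symdiff_set1 X x : symdiff X [set x] = if x \in X then X :\ x else x |: X.
Proof.
apply/setP => z; rewrite in_symdiff; case: ifP => xX; rewrite !inE;
  by case: (z =P x) => [->|]; rewrite ?xX ?addbT ?addbF.
Qed.

Lemma symdiff_toggle X Y x :
  x \in symdiff X Y -> symdiff (symdiff X [set x]) Y = symdiff X Y :\ x.
Proof.
rewrite in_symdiff => xXY; apply/setP => z; rewrite in_setD1 !in_symdiff in_set1.
by case: (z =P x) => [->|_]; rewrite ?addbT ?addNb ?xXY ?addbF.
Qed.

Definition box (G F : {set T}) : {set {set T}} :=
  [set H : {set T} | (G \subset H) && (H \subset F)].

Lemma mem_symdiff_imset X (K : {set {set T}}) H :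
  (H \in symdiff X @: K) = (symdiff X H \in K).
Proof. by rewrite -{1}(symdiffK X H) mem_imset //; apply: inv_inj (symdiffK X). Qed.

Lemma symdiff_imK X (K : {set {set T}}) : symdiff X @: (symdiff X @: K) = K.
Proof. by rewrite -imset_comp (eq_imset _ (symdiffK X)) imset_id. Qed.

End SymmetricDifference.

Section CubeComplex.
Context {d : Order.disp_t} {Q : finPOrderType d}.
Implicit Types (I M S c e v x y : {set Q}) (m : Q).

Lemma order_idealP I : reflect (forall z w, w <= z -> z \in I -> w \in I) (order_ideal I).
Proof.
apply: (iffP forallP) => [idI z w wz zI | idI z].
  by move/forallP/(_ w): (idI z); rewrite wz zI.
by apply/forallP => w; apply/implyP => /andP[wz zI]; apply: idI zI.
Qed.

Lemma maximal_inP I m :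
  reflect (m \in I /\ forall z, z \in I -> m <= z -> z = m) (maximal_in I m).
Proof.
apply: (iffP andP) => -[mI maxm]; split=> //.
  by move=> z zI mz; apply/eqP; move/forallP/(_ z): maxm; rewrite zI mz.
by apply/forallP => z; apply/implyP => /andP[zI mz]; rewrite (maxm z zI mz).
Qed.

Lemma is_cubeP I M :
  reflect (order_ideal I /\ forall m, m \in M -> maximal_in I m) (is_cube I M).
Proof.
apply: (iffP andP) => -[idI maxM]; split=> //.
  by move=> m mM; move/forallP/(_ m): maxM; rewrite mM.
by apply/forallP => m; apply/implyP; apply: maxM.
Qed.

Lemma order_idealD I S :
  order_ideal I -> (forall m, m \in S -> maximal_in I m) -> order_ideal (I :\: S).
Proof.
move=> /order_idealP idI maxS; apply/order_idealP => z w wz; rewrite !inE => /andP[zS zI].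
rewrite (idI z w wz zI) andbT; apply: contra zS => wS.
by case/maximal_inP: (maxS w wS) => _ maxw; rewrite (maxw z zI wz).
Qed.

Lemma XQ_adj_sym : symmetric (@XQ_adj _ Q).
Proof.
suff adj_flip x y : XQ_adj x y -> XQ_adj y x by move=> x y; apply/idP/idP; apply: adj_flip.
case/existsP=> I /existsP[m /andP[cubeIm xy]].
by apply/existsP; exists I; apply/existsP; exists m; rewrite cubeIm orbC.
Qed.

Lemma XQ_adjD1 I m : order_ideal I -> maximal_in I m -> XQ_adj I (I :\ m).
Proof.
move=> idI maxm; apply/existsP; exists I; apply/existsP; exists m.
by rewrite !eqxx orTb andbT; apply/is_cubeP; split=> // z /set1P->.
Qed.

Lemma XQ_adj_ideal x y : XQ_adj x y -> order_ideal x /\ order_ideal y.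
Proof.
case/existsP=> I /existsP[m /andP[/is_cubeP[idI maxm] xy]].
have idIm : order_ideal (I :\ m) by apply: order_idealD => // z /set1P->; apply/maxm/set11.
by case/orP: xy => /andP[/eqP-> /eqP->].
Qed.

Lemma card_symdiff_adj x y : XQ_adj x y -> #|symdiff x y| = 1.
Proof.
case/existsP=> I /existsP[m /andP[/is_cubeP[_ maxm] xy]].
have mI : m \in I by case/maximal_inP: (maxm m (set11 m)).
by case/orP: xy => /andP[/eqP-> /eqP->]; last rewrite symdiffC; apply: card_symdiff_setD1.
Qed.

Lemma edge_path_cat c v e p1 p2 :
  edge_path c v p1 -> edge_path v e p2 -> edge_path c e (p1 ++ p2).
Proof.
case/andP=> path1 /eqP last1 /andP[path2 last2].
by rewrite /edge_path cat_path last_cat last1 path1 path2.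
Qed.

Lemma edge_path_ideal c e p w : edge_path c e p -> w \in p -> order_ideal w.
Proof.
case/andP=> + _; elim: p c => //= a p IHp c /andP[ca ap].
case/predU1P=> [->|]; first exact: (XQ_adj_ideal ca).2.
exact: IHp ap.
Qed.

Lemma card_symdiff_le_size c e p : edge_path c e p -> (#|symdiff c e| <= size p)%N.
Proof.
elim: p c => [|a p IHp] c /andP[/= cp /eqP lastp].
  by rewrite -lastp leqn0 cards_eq0 symdiff_eq0.
case/andP: cp => ca ap.
have le_ae : (#|symdiff a e| <= size p)%N by apply: IHp; rewrite /edge_path ap lastp eqxx.
apply: leq_trans (subset_leq_card (symdiff_sub_setU c a e)) _.
apply: leq_trans (leq_card_setU _ _).1 _.
by rewrite card_symdiff_adj // add1n ltnS.
Qed.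

Lemma XQ_adj_toggle x y : order_ideal x -> order_ideal y -> x != y ->
  exists2 m, m \in symdiff x y & XQ_adj x (symdiff x [set m]).
Proof.
move=> /order_idealP idx /order_idealP idy xNy.
case: (eqVneq (x :\: y) set0) => [xy0 | /set0Pn[z zxy]]; last first.
  have [m /setDP[mx mNy] maxm] := exists_maximal zxy.
  exists m; first by rewrite in_symdiff mx (negbTE mNy).
  rewrite symdiff_set1 mx; apply: XQ_adjD1; first exact/order_idealP.
  apply/maximal_inP; split=> // w wx mw; apply: maxm (mw).
  by rewrite inE wx andbT; apply: contraNN mNy; apply: idy.
have [z zyx] : exists z, z \in y :\: x.
  apply/set0Pn/negP => /eqP yx0; case/negP: xNy.
  by rewrite eqEsubset -!setD_eq0 xy0 yx0 eqxx.
have [m /setDP[my mNx] minm] := exists_minimal zyx.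
exists m; first by rewrite in_symdiff my (negbTE mNx).
rewrite symdiff_set1 (negbTE mNx) XQ_adj_sym -{2}(setU1K mNx); apply: XQ_adjD1.
  apply/order_idealP => w u uw /setU1P[wm|wx]; apply/setU1P; last by right; apply: idx uw wx.
  have [ux|uNx] := boolP (u \in x); [by right | left].
  by apply: minm; [rewrite inE uNx (idy m) // -wm | rewrite -wm].
apply/maximal_inP; split=> [|w /setU1P[//|wx] mw]; first exact: setU11.
by move: mNx; rewrite (idx w m mw wx).
Qed.

Lemma exists_edge_path x y : order_ideal x -> order_ideal y ->
  exists2 p, edge_path x y p & size p = #|symdiff x y|.
Proof.
move=> idx idy; move Hn: #|symdiff x y| => n.
elim: n x Hn idx => [|n IHn] x Hn idx.
  by exists [::]; rewrite // /edge_path /= -symdiff_eq0 -cards_eq0 Hn.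
have xNy : x != y by rewrite -symdiff_eq0 -cards_eq0 Hn.
have [m mxy adj] := XQ_adj_toggle idx idy xNy.
have [|p /andP[pathp lastp] sizep] := IHn _ _ (XQ_adj_ideal adj).2.
  by apply/eqP; rewrite -eqSS -Hn (cardsD1 m (symdiff x y)) mxy symdiff_toggle.
by exists (symdiff x [set m] :: p); rewrite /= ?sizep // /edge_path /= adj pathp.
Qed.

Lemma edge_path_split c e p v : edge_path c e p -> v \in c :: p ->
  exists p1 p2, [/\ edge_path c v p1, edge_path v e p2 & (size p1 + size p2)%N = size p].
Proof.
move=> /andP[pathp /eqP lastp] vp; move: pathp lastp; case/splitPl: vp => p1 p2 lastv.
rewrite cat_path last_cat => /andP[path1 path2] lastp.
by exists p1, p2; rewrite /edge_path -lastv path1 path2 lastp size_cat !eqxx.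
Qed.

Lemma card_symdiff_between c v e :
  (#|symdiff c v| + #|symdiff v e| <= #|symdiff c e|)%N =
  (c :&: e \subset v) && (v \subset c :|: e).
Proof.
have -> : symdiff c e = symdiff (symdiff c v) (symdiff v e).
  by apply/setP => z; rewrite !in_symdiff addbA addbK.
rewrite -card_symdiff -{2}(addn0 #|symdiff _ _|) leq_add2l leqn0 double_eq0 cards_eq0.
apply/eqP/andP => [/setP I0 | [/subsetP ce_v /subsetP v_ce]].
  split; apply/subsetP => z; move: (I0 z); rewrite in_setI in_set0 !in_symdiff !inE;
    by case: (z \in c); case: (z \in v); case: (z \in e).
apply/setP => z; rewrite in_setI in_set0 !in_symdiff.
move/implyP: (ce_v z); move/implyP: (v_ce z); rewrite !inE.
by case: (z \in c); case: (z \in v); case: (z \in e).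
Qed.

Lemma on_geodesicP c e v : order_ideal c -> order_ideal e ->
  on_geodesic v c e <-> order_ideal v /\ (c :&: e \subset v) && (v \subset c :|: e).
Proof.
move=> idc ide; split=> [[p [[pathp minp] vp]] | [idv between_v]].
  split; first by case/predU1P: vp => [->|]; last exact: edge_path_ideal pathp.
  have [q pathq sizeq] := exists_edge_path idc ide.
  have [p1 [p2 [path1 path2 sizep]]] := edge_path_split pathp vp.
  rewrite -card_symdiff_between -sizeq; apply: leq_trans (minp q pathq).
  by rewrite -sizep leq_add // card_symdiff_le_size.
have [p1 path1 size1] := exists_edge_path idc idv.
have [p2 path2 size2] := exists_edge_path idv ide.
exists (p1 ++ p2); split; last first.
  by case/andP: (path1) => _ /eqP <-; rewrite -cat_cons mem_cat mem_last.
split=> [|q pathq]; first exact: edge_path_cat path1 path2.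
rewrite size_cat size1 size2; apply: leq_trans (card_symdiff_le_size pathq).
by rewrite card_symdiff_between.
Qed.

Lemma cube_vertsE I S v : (v \in cube_verts I S) = (v \subset I) && (I :\: v \subset S).
Proof.
apply/imsetP/andP => [[T] | [vI IvS]].
  rewrite powersetE => TS ->; split; first exact: subsetDl.
  by rewrite setDDr setDv set0U; apply: subset_trans (subsetIr _ _) TS.
by exists (I :\: v); rewrite ?powersetE // setDDr setDv set0U (setIidPr vI).
Qed.

Lemma cube_verts_ideal I S v : is_cube I S -> v \in cube_verts I S -> order_ideal v.
Proof.
case/is_cubeP=> idI maxS; rewrite cube_vertsE => /andP[vI /subsetP IvS].
rewrite -(setIidPr vI) -[I :&: v]set0U -(setDv I) -setDDr.
by apply: order_idealD => // m /IvS /maxS.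
Qed.

Lemma cube_verts_symdiff X I S : S \subset I ->
  symdiff X @: cube_verts I S = box (symdiff X I :\: S) (symdiff X I :|: S).
Proof.
move=> /subsetP SI; apply/setP => H; rewrite mem_symdiff_imset cube_vertsE inE.
apply/andP/andP => -[/subsetP sub1 /subsetP sub2]; split; apply/subsetP => z;
  move/implyP: (SI z); move/implyP: (sub1 z); move/implyP: (sub2 z); rewrite !inE;
  by case: (z \in X); case: (z \in I); case: (z \in S); case: (z \in H).
Qed.

End CubeComplex.

Section Interval.
Context {d : Order.disp_t} {Q : finPOrderType d}.
Variables A B M N : {set Q}.
Hypotheses (cubeAM : is_cube A M) (cubeBN : is_cube B N)
  (subAB : A \subset B) (subBA_N : B :\: A \subset N).
Implicit Types (h v G F : {set Q}).

Definition interval_vertex v := [&& order_ideal v, v \subset B & A :\: v \subset M :|: N].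

Lemma interval_vertexP v :
  (exists c e, [/\ c \in cube_verts A M, e \in cube_verts B N & on_geodesic v c e]) <->
  interval_vertex v.
Proof.
split=> [[c [e [cAM eBN]]] | /and3P[idv /subsetP vB /subsetP AvMN]].
  have idc := cube_verts_ideal cubeAM cAM; have ide := cube_verts_ideal cubeBN eBN.
  case/(on_geodesicP _ idc ide) => idv /andP[/subsetP low /subsetP up].
  move: cAM eBN; rewrite !cube_vertsE => /andP[cA /subsetP AcM] /andP[eB /subsetP BeN].
  rewrite /interval_vertex idv /=; apply/andP; split; apply/subsetP => z.
    by move/up; rewrite inE => /orP[/(subsetP cA)/(subsetP subAB) | /(subsetP eB)].
  rewrite inE => /andP[zNv zA]; have zB := subsetP subAB z zA.
  have : z \notin c :&: e by apply: contra zNv; apply: low.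
  rewrite inE negb_and => /orP[zNc | zNe]; rewrite inE.
    by rewrite AcM // inE zNc.
  by rewrite BeN ?orbT // inE zNe.
exists (A :\: (M :\: v)), (B :\: (N :\: v)).
have cAM : A :\: (M :\: v) \in cube_verts A M.
  by apply/imsetP; exists (M :\: v); rewrite ?powersetE ?subsetDl.
have eBN : B :\: (N :\: v) \in cube_verts B N.
  by apply/imsetP; exists (N :\: v); rewrite ?powersetE ?subsetDl.
have [idc ide] := (cube_verts_ideal cubeAM cAM, cube_verts_ideal cubeBN eBN).
split=> //; apply/(on_geodesicP _ idc ide).
split=> //; apply/andP; split; apply/subsetP => z; rewrite !inE; last first.
  by move=> zv; rewrite zv (vB z zv) orbT.
case/andP=> /andP[zNvM zA] /andP[zNvN _]; apply/negPn/negP => zNv.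
have /setUP[zM | zN] : z \in M :|: N by apply: AvMN; rewrite inE zNv.
  by move: zNvM; rewrite zNv zM.
by move: zNvN; rewrite zNv zN.
Qed.

Lemma interval_cubeP K :
  interval_cube (cube_verts A M) (cube_verts B N) K <->
  XQ_cube K /\ {subset K <= interval_vertex}.
Proof. by split=> -[cubeK verts]; split=> // v /verts/interval_vertexP. Qed.

Definition coords := (B :\: A) :|: (A :&: (M :|: N)).

Definition face h := [forall r in h :&: A, forall p in h :\: A, ~~ (r <= p)].

Lemma faceP h :
  reflect (forall r p, r \in h :&: A -> p \in h :\: A -> ~~ (r <= p)) (face h).
Proof.
apply: (iffP forall_inP) => [noup r p rhA | noup r rhA].
  by move/forall_inP: (noup r rhA); apply.
by apply/forall_inP => p; apply: noup.
Qed.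

Lemma faceS h h' : h' \subset h -> face h -> face h'.
Proof.
move=> /subsetP hh' /faceP noup; apply/faceP => r p /setIP[/hh' rh rA] /setDP[/hh' ph pNA].
by apply: noup; rewrite !inE ?rh ?rA ?ph ?pNA.
Qed.

Lemma maximal_in_A m : m \in coords -> m \in A -> maximal_in A m.
Proof.
have [_ maxM] := is_cubeP _ _ cubeAM; have [_ maxN] := is_cubeP _ _ cubeBN.
move=> + mA; rewrite !inE mA /= => /orP[/maxM // | /maxN/maximal_inP[_ maxm]].
by apply/maximal_inP; split=> // z zA; apply: maxm; apply: subsetP subAB z zA.
Qed.

Lemma maximal_in_B m : m \in B -> m \notin A -> maximal_in B m.
Proof.
have [_ maxN] := is_cubeP _ _ cubeBN.
by move=> mB mNA; apply/maxN/(subsetP subBA_N); rewrite inE mNA.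
Qed.

Lemma symdiff_sub_B h : h \subset coords -> symdiff A h \subset B.
Proof.
move=> /subsetP hC; apply/subsetP => z; rewrite inE => /orP[/setDP[zA _] | /setDP[zh _]].
  exact: subsetP subAB z zA.
by move: (hC z zh); rewrite !inE => /orP[/andP[] | /andP[/(subsetP subAB)]].
Qed.

Lemma order_ideal_symdiff h : h \subset coords -> order_ideal (symdiff A h) = face h.
Proof.
move=> hC; have [/order_idealP idA _] := is_cubeP _ _ cubeAM.
have [/order_idealP idB _] := is_cubeP _ _ cubeBN.
apply/order_idealP/faceP => [idAh r p /setIP[rh rA] /setDP[ph pNA] | noup z w wz].
  apply/negP => rp; move/(_ p r rp): idAh.
  by rewrite !in_symdiff rA rh ph (negbTE pNA) => /(_ isT).
rewrite !in_symdiff; have [zA /= zNh | zNA /= zh] := boolP (z \in A).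
  rewrite (idA z w wz zA) /=; apply: contra zNh => wh.
  have [_ maxw] := maximal_inP _ _ (maximal_in_A (subsetP hC w wh) (idA z w wz zA)).
  by rewrite (maxw z zA wz).
have zB : z \in B.
  by apply: (subsetP (symdiff_sub_B hC)); rewrite in_symdiff zh (negbTE zNA).
have wB := idB z w wz zB.
have [wA | wNA] /= := boolP (w \in A).
  by apply: contraL wz => wh; apply: noup; rewrite !inE ?wh ?wA ?zh ?zNA.
have [_ maxw] := maximal_inP _ _ (maximal_in_B wB wNA).
by rewrite -(maxw z zB wz).
Qed.

Lemma interval_vertex_symdiff h : h \subset coords -> interval_vertex (symdiff A h) = face h.
Proof.
move=> hC; rewrite /interval_vertex order_ideal_symdiff // symdiff_sub_B //=.
suff -> : A :\: symdiff A h \subset M :|: N by rewrite andbT.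
apply/subsetP => z; rewrite inE in_symdiff => /andP[+ zA]; rewrite zA /= negbK.
by move/(subsetP hC); rewrite !inE zA.
Qed.

Lemma symdiff_interval_vertex v : interval_vertex v -> symdiff A v \subset coords.
Proof.
case/and3P=> _ /subsetP vB /subsetP AvMN; apply/subsetP => z.
rewrite in_symdiff !inE; have [zA /= zNv | zNA /= zv] := boolP (z \in A).
  by have := AvMN z; rewrite !inE zA zNv => /(_ isT).
by rewrite vB.
Qed.

Lemma maximal_in_symdiff h F m : F \subset coords -> face F -> h \subset F ->
  m \in F -> m \in symdiff A h -> maximal_in (symdiff A h) m.
Proof.
move=> /subsetP FC /faceP noup /subsetP hF mF mAh; apply/maximal_inP; split=> // z zAh mz.
have hC : h \subset coords by apply/subsetP => w /hF/FC.
have zB := subsetP (symdiff_sub_B hC) z zAh.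
have [mA | mNA] := boolP (m \in A); last first.
  have mB := subsetP (symdiff_sub_B hC) m mAh.
  by case/maximal_inP: (maximal_in_B mB mNA) => _ maxm; apply: maxm.
have [zA | zNA] := boolP (z \in A).
  by case/maximal_inP: (maximal_in_A (FC m mF) mA) => _ maxm; apply: maxm.
move: zAh; rewrite in_symdiff (negbTE zNA) /= => /hF zF.
by move: (noup m z); rewrite !inE mA mF zF zNA mz => /(_ isT isT).
Qed.

Lemma box_cube G F : G \subset F -> F \subset coords -> face F ->
  exists2 I, is_cube I (F :\: G) & symdiff A @: box G F = cube_verts I (F :\: G).
Proof.
move=> /subsetP GF FC faceF; pose top := G :|: (F :\: G :\: A).
have topF : top \subset F by apply/subsetP => z; rewrite !inE => /orP[/GF | /and3P[]].
have FGI : F :\: G \subset symdiff A top.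
  apply/subsetP => z; rewrite in_symdiff !inE.
  by case: (z \in A); case: (z \in G); case: (z \in F).
exists (symdiff A top).
  apply/is_cubeP; split; first by rewrite order_ideal_symdiff ?(faceS topF) ?(subset_trans topF).
  move=> m mFG; apply: maximal_in_symdiff FC faceF topF _ (subsetP FGI m mFG).
  by case/setDP: mFG.
rewrite -[cube_verts _ _](symdiff_imK A) cube_verts_symdiff // symdiffK.
congr (_ @: box _ _); apply/setP => z; move/implyP: (GF z); rewrite !inE;
  by case: (z \in A); case: (z \in G); case: (z \in F).
Qed.

Definition coord : finType := {x : Q | x \in coords}.

Definition val_set (H : {set coord}) : {set Q} := val @: H.

Definition faces : {set {set coord}} := [set H : {set coord} | face (val_set H)].

Definition embed (H : {set coord}) : {set Q} := symdiff A (val_set H).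

Lemma val_set_coords (H : {set coord}) : val_set H \subset coords.
Proof. by apply/subsetP => _ /imsetP[x _ ->]; apply: valP. Qed.

Lemma val_setK h : h \subset coords -> val_set (val @^-1: h) = h.
Proof.
move=> /subsetP hC; apply/setP => z; apply/imsetP/idP => [[x] | zh].
  by rewrite inE => ? ->.
by exists (exist _ z (hC z zh)); rewrite ?inE.
Qed.

Lemma val_set_inj : injective val_set.
Proof. exact: imset_inj val_inj. Qed.

Lemma val_setS (G H : {set coord}) : (val_set G \subset val_set H) = (G \subset H).
Proof.
apply/idP/idP => [/subsetP GH|]; last exact: imsetS.
by apply/subsetP => x xG; rewrite -(mem_imset _ _ val_inj) GH ?imset_f.
Qed.

Lemma val_set_box (G F : {set coord}) : val_set @: box G F = box (val_set G) (val_set F).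
Proof.
apply/setP => h; rewrite inE; apply/imsetP/andP => [[H] | [Gh hF]].
  by rewrite inE -!val_setS => /andP[? ?] ->.
have hC : h \subset coords := subset_trans hF (val_set_coords F).
by exists (val @^-1: h); rewrite ?val_setK // inE -!val_setS val_setK ?Gh.
Qed.

Lemma embed_imset (K : {set {set coord}}) : embed @: K = symdiff A @: (val_set @: K).
Proof. exact: imset_comp. Qed.

Lemma embed_inj : injective embed.
Proof. by move=> G H /(inv_inj (symdiffK A))/val_set_inj. Qed.

Lemma embed0 : embed set0 = A.
Proof. by rewrite /embed /val_set imset0; apply/setP => z; rewrite in_symdiff inE addbF. Qed.

Lemma embed_face (H : {set coord}) : H \in faces -> interval_vertex (embed H).
Proof. by rewrite inE interval_vertex_symdiff ?val_set_coords. Qed.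

Lemma embed_onto v : interval_vertex v -> exists2 H, H \in faces & embed H = v.
Proof.
move=> vI; have vC := symdiff_interval_vertex vI.
exists (val @^-1: symdiff A v); last by rewrite /embed val_setK ?symdiffK.
by rewrite inE val_setK // -interval_vertex_symdiff // symdiffK.
Qed.

Lemma flag_complex_faces : flag_complex faces.
Proof.
split=> [||v|F pairF]; rewrite ?inE /val_set.
- by rewrite imset0; apply/faceP => r p; rewrite !inE.
- by move=> F G; rewrite !inE => faceF GF; apply: faceS faceF; apply: imsetS.
- rewrite imset_set1; apply/faceP => r p; rewrite !inE => /andP[/eqP-> rA] /andP[pNA /eqP pv].
  by move: pNA; rewrite pv rA.
apply/faceP => _ _ /setIP[/imsetP[u uF ->] uA] /setDP[/imsetP[w wF ->] wNA].
move: (pairF u w uF wF); rewrite inE => /faceP; apply; rewrite !inE ?uA ?wNA ?andbT /=;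
  by apply: imset_f; rewrite !inE eqxx ?orbT.
Qed.

Lemma orth_cube_embed (K : {set {set coord}}) : K \subset faces ->
  orth_cube faces K <-> interval_cube (cube_verts A M) (cube_verts B N) (embed @: K).
Proof.
move=> /subsetP Kfaces.
split=> [[G [F [_ faceF GF eqK]]] | /interval_cubeP[[I [S [cubeIS eqK]]] _]].
  apply/interval_cubeP; split; last by move=> _ /imsetP[H /Kfaces/embed_face ? ->].
  rewrite inE in faceF; rewrite -val_setS in GF.
  rewrite eqK embed_imset val_set_box.
  have [I cubeI ->] := box_cube GF (val_set_coords F) faceF.
  by exists I, (val_set F :\: val_set G).
have SI : S \subset I.
  by case/is_cubeP: cubeIS => _ maxS; apply/subsetP => m /maxS/maximal_inP[].
have valK : val_set @: K = box (symdiff A I :\: S) (symdiff A I :|: S).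
  by rewrite -cube_verts_symdiff // -eqK embed_imset symdiff_imK.
have lowhigh : symdiff A I :\: S \subset symdiff A I :|: S.
  exact: subset_trans (subsetDl _ _) (subsetUl _ _).
have /imsetP[G GK eqG] : symdiff A I :\: S \in val_set @: K by rewrite valK inE subxx lowhigh.
have /imsetP[F FK eqF] : symdiff A I :|: S \in val_set @: K by rewrite valK inE subxx lowhigh.
exists G, F; split; [exact: Kfaces | exact: Kfaces | by rewrite -val_setS -eqG -eqF |].
by apply: (imset_inj val_set_inj); rewrite valK eqG eqF -val_set_box.
Qed.

Lemma interval_cube_embed (K' : {set {set Q}}) :
  interval_cube (cube_verts A M) (cube_verts B N) K' ->
  exists2 K : {set {set coord}}, K \subset faces & K' = embed @: K.
Proof.
case/interval_cubeP=> _ verts; exists [set H : {set coord} in faces | embed H \in K'].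
  by apply/subsetP => H; rewrite inE => /andP[].
apply/setP => v; apply/idP/imsetP => [vK | [H]]; last by rewrite inE => /andP[_ ?] ->.
by have [H Hf eHv] := embed_onto (verts v vK); exists H; rewrite // inE Hf eHv vK.
Qed.

Lemma interval_truncated_orthant :
  truncated_orthant_iso faces embed (interval_cube (cube_verts A M) (cube_verts B N)) A.
Proof.
split; [exact: flag_complex_faces | by move=> G H _ _; apply: embed_inj | exact: embed0 | split].
- by move=> v [K [/interval_cubeP[_ verts] vK]]; apply: embed_onto (verts v vK).
- exact: orth_cube_embed.
- exact: interval_cube_embed.
Qed.

End Interval.

Theorem corollary5p5 (d : Order.disp_t) (Q : finPOrderType d)
  (s : seq ({set Q} * {set Q})) (i : nat) :
  valid_cube_seq s -> (i.+1 < size s)%N ->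
  is_truncated_orthant_space
    (interval_cube (cube_verts (sI s i) (sM s i))
                   (cube_verts (sI s i.+1) (sM s i.+1)))
    (sI s i).
Proof.
case=> _ cube_s proper_s _ [_ sub_s _] lti.
eexists _, _, _; apply: interval_truncated_orthant.
- exact: cube_s (ltnW lti).
- exact: cube_s.
- exact: proper_sub (proper_s i lti).
- exact: sub_s.
Qed.
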